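(* Let $k$ be a field, $n\ge 2$, and $d_1,\ldots,d_n$ positive integers. The algebra $A=k[x_1, \ldots, x_n]/(x_1^{d_1}, \ldots, x_n^{d_n})$ has the weak Lefschetz property if and only if multiplication by $(x_1+ \dots + x_{n-1})^{d_n}$ has maximal rank in every degree on $B=k[x_1, \ldots, x_{n-1}]/(x_1^{d_1}, \ldots, x_{n-1}^{d_{n-1}})$, i.e. for every $i$ the map $B_i\to B_{i+d_n}$, $b\mapsto (x_1+\cdots+x_{n-1})^{d_n}b$, is injective or surjective.
   Context: Algebras are graded by degree, $A=\bigoplus_{i\ge0}A_i$. A graded artinian algebra $A$ has the weak Lefschetz property if there is a linear form $\ell\in A_1$ such that for every $i$ the map $A_i\to A_{i+1}$, $a\mapsto \ell a$, is injective or surjective. *)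

From HB Require Import structures.
From mathcomp Require Import all_boot all_order all_algebra.
From mathcomp Require Import mpoly.
Set Implicit Arguments. Unset Strict Implicit. Unset Printing Implicit Defensive.
Import Order.TTheory GRing.Theory.
Local Open Scope ring_scope.

Definition in_mci_ideal (k : fieldType) (n : nat) (d : 'I_n -> nat)
    (f : {mpoly k[n]}) : Prop :=
  exists g : 'I_n -> {mpoly k[n]}, f = \sum_(j < n) g j * 'X_j ^+ d j.

(* For A = k[x_1..x_n]/(x_j^{d_j}) with graded pieces A_i = (homogeneous
   degree-i polynomials) modulo the ideal, and f homogeneous of degree e,
   the map A_i -> A_{i+e}, a |-> f a, is injective or surjective. *)
Definition mult_inj_or_surj (k : fieldType) (n : nat) (d : 'I_n -> nat)
    (f : {mpoly k[n]}) (e i : nat) : Prop :=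
  (forall g : {mpoly k[n]}, g \is i.-homog ->
      in_mci_ideal d (f * g) -> in_mci_ideal d g)
  \/
  (forall h : {mpoly k[n]}, h \is (i + e)%N.-homog ->
      exists g : {mpoly k[n]}, g \is i.-homog /\ in_mci_ideal d (h - f * g)).

Definition has_WLP (k : fieldType) (n : nat) (d : 'I_n -> nat) : Prop :=
  exists l : {mpoly k[n]}, l \is 1%N.-homog /\
    forall i : nat, mult_inj_or_surj d l 1 i.

Lemma last_index_proof (n : nat) : (0 < n)%N -> (n.-1 < n)%N.
Proof. by rewrite ltn_predL. Qed.

Definition last_index (n : nat) (hn : (0 < n)%N) : 'I_n :=
  Ordinal (last_index_proof hn).

Definition init_exps (n : nat) (d : 'I_n -> nat) : 'I_n.-1 -> nat :=
  fun j => d (widen_ord (leq_pred n) j).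

From HB Require Import structures.
From mathcomp Require Import all_boot all_order all_algebra.
From mathcomp Require Import mpoly.
From mathcomp Require Import zify ring.
Set Implicit Arguments. Unset Strict Implicit. Unset Printing Implicit Defensive.
Import Order.TTheory GRing.Theory.
Local Open Scope ring_scope.

(* Write l for the sum of the variables. If a linear form l' gives A the weak
   Lefschetz property, so does l: rescaling the variables preserves the ideal and
   turns the nonzero coefficients of l' into 1, and for the grading by degree in the
   variables T missing from l', multiplication by l = l' + sum_(j in T) x_j is
   triangular with diagonal part l', so injectivity and surjectivity pass to l.
   Then view A as B[y]/(y^d) with y = x_n, d = d_n and L = x_1 + ... + x_(n-1), so
   that l = L + y. For g = sum_(t < d) c_t y^t and h in B, l g = h in A means
   L c_0 = h and L c_t + c_(t-1) = 0 for 0 < t < d, that is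
   c_t = (-L)^(d-1-t) c_(d-1) and h = -(-L)^d c_(d-1). Hence g |-> c_(d-1) maps the
   kernel of l on A_i onto the kernel of L^d on B_(i+1-d), and A/lA = B/L^d B. *)

Section MPolyCoef.
Variables (R : nzRingType) (N : nat) (mf : measure N).
Implicit Types (f g p : {mpoly R[N]}) (m u : 'X_{1..N}).

Lemma mcoeffMX_eq0 f m u : ~~ (u <= m)%MM -> (f * 'X_[u])@_m = 0.
Proof.
move=> Num; apply/eqP; rewrite mcoeff_eq0 (perm_mem (msuppMX f u)); apply/negP.
move=> /mapP [m' _ Em]; move: Num; rewrite Em => /negP; apply.
by apply/mnm_lepP => i; rewrite mnmDE leq_addr.
Qed.

Lemma sum_msupp_mcoeffX (F : 'X_{1..N} -> R) p m :
  \sum_(m' <- msupp p) p@_m' * (F m' * (m' == m)%:R) = p@_m * F m.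
Proof.
rewrite [p in RHS]mpolyE raddf_sum mulr_suml /=; apply: eq_bigr => m' _.
rewrite mcoeffZ mcoeffX; case: eqP => [->|_]; first by rewrite !mulr1.
by rewrite !mulr0 mul0r.
Qed.

Lemma dhomog_mcoeffP d p :
  p \is d.-homog for mf <-> (forall m, mf m != d -> p@_m = 0).
Proof.
split=> [hp m|hp]; first exact: dhomog_nemf_coeff.
apply/dhomogP => m; rewrite mcoeff_msupp => nz.
by apply/eqP; apply: contraNT nz => /hp ->.
Qed.

Lemma mcoeff_pihomog d p m :
  (pihomog mf d p)@_m = if mf m == d then p@_m else 0.
Proof.
rewrite pihomogE {3}[p]mpolyE !raddf_sum /= big_mkcond /=.
case: ifP => Hm.
  apply: eq_bigr => m' _; rewrite mcoeffZ mcoeffX; case: ifP => // Hm'.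
  by case: eqP => [E|]; [rewrite E Hm in Hm'|rewrite mulr0].
rewrite big1 // => m' _; case: ifP => Hm' //.
by rewrite mcoeffZ mcoeffX; case: eqP => [E|]; [rewrite -E Hm' in Hm|rewrite mulr0].
Qed.

Lemma pihomog_dhomog d r p :
  p \is d.-homog for mf -> pihomog mf r p = if d == r then p else 0.
Proof.
by move=> hp; case: eqP => [<-|/eqP ne]; [exact: pihomog_dE|exact: pihomog_ne0 ne hp].
Qed.

Lemma pihomog_pihomog r s p :
  pihomog mf r (pihomog mf s p) = if s == r then pihomog mf s p else 0.
Proof. by apply: pihomog_dhomog; apply: pihomogP. Qed.

Lemma pihomogMl e r f g : f \is e.-homog for mf ->
  pihomog mf r (f * g) = if (e <= r)%N then f * pihomog mf (r - e) g else 0.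
Proof.
move=> hf; set K := maxn (mmeasure mf g) (r - e).+1.
rewrite {1}(@pihomog_partitionE _ _ _ K g (leq_maxl _ _)) mulr_sumr linear_sum /=.
have piM s : pihomog mf r (f * pihomog mf s g) =
    if (e + s == r)%N then f * pihomog mf s g else 0.
  by apply: pihomog_dhomog; apply: dhomogM => //; apply: pihomogP.
under eq_bigr do rewrite piM.
case: leqP => her.
  have lt : (r - e < K)%N by rewrite leq_maxr.
  rewrite (bigD1 (Ordinal lt)) /= ?subnKC ?eqxx // big1 ?addr0 // => s ne.
  by case: eqP => // es; move: ne; rewrite -val_eqE /= -es addKn eqxx.
rewrite big1 // => s _; case: eqP => // es.
by move: her; rewrite -es ltnNge leq_addr.
Qed.

End MPolyCoef.

Lemma dhomog_pihomog (R : nzRingType) N (mf mf' : measure N) d r (p : {mpoly R[N]}) :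
  p \is d.-homog for mf' -> pihomog mf r p \is d.-homog for mf'.
Proof.
move=> /dhomog_mcoeffP hp; apply/dhomog_mcoeffP => m /hp hm.
by rewrite mcoeff_pihomog hm if_same.
Qed.

Section MonomialIdeal.
Variables (k : fieldType) (N : nat) (D : 'I_N -> nat).
Implicit Types (f g : {mpoly k[N]}) (m : 'X_{1..N}).
Local Notation inI := (@in_mci_ideal k N D).

Definition mci_standard m := [forall j, m j < D j]%N.

Lemma in_mci_idealP f : inI f <-> (forall m, mci_standard m -> f@_m = 0).
Proof.
split.
  case=> g -> m /forallP sm; rewrite raddf_sum /= big1 // => j _.
  rewrite mpolyXn mcoeffMX_eq0 //; apply/negP => /mnm_lepP /(_ j).
  by rewrite mulmnE mnm1E eqxx mul1n leqNgt sm.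
move=> f_std.
(* Each non-standard monomial of f is charged to the first x_j ^ D j dividing it. *)
pose pj m := [pick j | (D j <= m j)%N].
exists (fun j => \sum_(m <- msupp f | pj m == Some j)
                   f@_m *: 'X_[(m - U_(j) *+ D j)%MM]).
have pjS m j : pj m = Some j -> (D j <= m j)%N.
  by rewrite /pj; case: pickP => // x Hx [<-].
have pjN m : pj m = None -> mci_standard m.
  by rewrite /pj; case: pickP => // Hn _; apply/forallP => j; rewrite ltnNge Hn.
apply/esym; under eq_bigr do rewrite mulr_suml big_mkcond.
rewrite exchange_big /= [RHS]mpolyE; apply: eq_bigr => m _.
case E: (pj m) => [j|]; last by rewrite big1 // f_std ?scale0r // pjN.
rewrite (bigD1 j) ?E ?eqxx //= big1 ?addr0; last first.
  by move=> j' /negbTE nj; case: eqP => // -[] /eqP; rewrite eq_sym nj.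
rewrite -scalerAl mpolyXn -mpolyXD submK //; apply/mnm_lepP => i.
rewrite mulmnE mnm1E; case: eqP => [<-|]; first by rewrite mul1n pjS.
by rewrite mul0n.
Qed.

Lemma mci_ideal0 : inI 0.
Proof. by apply/in_mci_idealP => m _; rewrite mcoeff0. Qed.

Lemma mci_idealD f g : inI f -> inI g -> inI (f + g).
Proof.
move=> /in_mci_idealP hf /in_mci_idealP hg; apply/in_mci_idealP => m sm.
by rewrite mcoeffD hf ?hg ?addr0.
Qed.

Lemma mci_idealN f : inI f -> inI (- f).
Proof.
by move=> /in_mci_idealP hf; apply/in_mci_idealP => m sm; rewrite mcoeffN hf ?oppr0.
Qed.

Lemma mci_idealB f g : inI f -> inI g -> inI (f - g).
Proof. by move=> hf hg; apply/mci_idealD/mci_idealN. Qed.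

Lemma mci_idealMl f g : inI g -> inI (f * g).
Proof.
case=> G ->; exists (fun j => f * G j); rewrite mulr_sumr.
by apply: eq_bigr => j _; rewrite mulrA.
Qed.

Lemma mci_ideal_trans f g : inI (f - g) -> inI g -> inI f.
Proof. by move=> hfg hg; rewrite -[f](subrK g); apply: mci_idealD. Qed.

Lemma mci_ideal_pihomog (mf : measure N) r f : inI f -> inI (pihomog mf r f).
Proof.
move=> /in_mci_idealP hf; apply/in_mci_idealP => m sm.
by rewrite mcoeff_pihomog hf // if_same.
Qed.

Lemma mci_ideal_from_pihomog (mf : measure N) f :
  (forall r, inI (pihomog mf r f)) -> inI f.
Proof.
move=> hf; apply/in_mci_idealP => m sm.
by have /in_mci_idealP /(_ m sm) := hf (mf m); rewrite mcoeff_pihomog eqxx.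
Qed.

End MonomialIdeal.

Lemma mult_surj_dhomog (k : fieldType) N (D : 'I_N -> nat) (f : {mpoly k[N]}) e i :
  f \is e.-homog ->
  (forall h : {mpoly k[N]}, h \is (i + e)%N.-homog ->
     exists g, in_mci_ideal D (h - f * g)) ->
  (forall h : {mpoly k[N]}, h \is (i + e)%N.-homog ->
     exists g, g \is i.-homog /\ in_mci_ideal D (h - f * g)).
Proof.
move=> hf f_surj h hh; have [g hg] := f_surj h hh.
exists (pihomog mdeg i g); split; first exact: pihomogP.
have := mci_ideal_pihomog mdeg (i + e) hg.
by rewrite linearB /= (pihomog_dE hh) (pihomogMl _ _ hf) leq_addl addnK.
Qed.

Section Rescaling.
Variables (k : fieldType) (N : nat).
Implicit Types (f g h p : {mpoly k[N]}) (m : 'X_{1..N}) (a c : 'I_N -> k).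

Definition mweight c m : k := \prod_(j < N) c j ^+ m j.

Definition mrescale c p := p \mPo [tuple c j *: 'X_j | j < N].

Lemma mrescaleX c m : mrescale c 'X_[m] = mweight c m *: 'X_[m].
Proof.
rewrite /mrescale comp_mpolyX; under eq_bigr do rewrite tnth_mktuple exprZn.
by rewrite scaler_prod -mpolyXE_id.
Qed.

Lemma mcoeff_mrescale c p m : (mrescale c p)@_m = p@_m * mweight c m.
Proof.
rewrite /mrescale comp_mpolyEX raddf_sum /= -(sum_msupp_mcoeffX (mweight c)).
by apply: eq_bigr => m' _; rewrite -/(mrescale c _) mrescaleX mcoeffZ mcoeffZ mcoeffX.
Qed.

Lemma mrescaleM c f g : mrescale c (f * g) = mrescale c f * mrescale c g.
Proof. exact: rmorphM. Qed.

Lemma mrescaleB c f g : mrescale c (f - g) = mrescale c f - mrescale c g.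
Proof. exact: raddfB. Qed.

Lemma mrescaleK c c' p : (forall j, c j * c' j = 1) ->
  mrescale c (mrescale c' p) = p.
Proof.
move=> cc'; apply/mpolyP => m; rewrite !mcoeff_mrescale -mulrA /mweight -big_split /=.
by rewrite big1 ?mulr1 // => j _; rewrite -exprMn mulrC cc' expr1n.
Qed.

Lemma dhomog_mrescale c d p : p \is d.-homog -> mrescale c p \is d.-homog.
Proof.
move=> /dhomog_mcoeffP hp; apply/dhomog_mcoeffP => m /hp hm.
by rewrite mcoeff_mrescale hm mul0r.
Qed.

Lemma in_mci_ideal_mrescale (D : 'I_N -> nat) c p : (forall j, c j != 0) ->
  in_mci_ideal D (mrescale c p) <-> in_mci_ideal D p.
Proof.
move=> c_neq0; have wt_neq0 m : mweight c m != 0.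
  by rewrite prodf_seq_neq0; apply/allP => j _; rewrite expf_neq0.
rewrite !in_mci_idealP; split=> hp m sm; last by rewrite mcoeff_mrescale hp ?mul0r.
by move/eqP: (hp m sm); rewrite mcoeff_mrescale mulf_eq0 (negbTE (wt_neq0 m)) orbF => /eqP.
Qed.

Lemma mult_inj_or_surj_mrescale (D : 'I_N -> nat) c f e i :
  (forall j, c j != 0) ->
  mult_inj_or_surj D f e i -> mult_inj_or_surj D (mrescale c f) e i.
Proof.
move=> c_neq0; pose c' j := (c j)^-1.
have c'_neq0 j : c' j != 0 by rewrite invr_eq0.
have cK p : mrescale c (mrescale c' p) = p by apply: mrescaleK => j; rewrite mulfV.
case=> [f_inj|f_surj]; [left|right].
  move=> g hg; rewrite -(cK g) -mrescaleM !(in_mci_ideal_mrescale _ _ c_neq0).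
  by move=> hfg; apply: f_inj => //; apply: dhomog_mrescale.
move=> h hh; have [|g [hg hI]] := f_surj (mrescale c' h); first exact: dhomog_mrescale.
exists (mrescale c g); split; first exact: dhomog_mrescale.
by rewrite -(cK h) -mrescaleM -mrescaleB in_mci_ideal_mrescale.
Qed.

Definition linform a : {mpoly k[N]} := \sum_(j < N) a j *: 'X_j.

Lemma mcoeff_linform a m : (linform a)@_m = \sum_(j < N) a j * (U_(j)%MM == m)%:R.
Proof. by rewrite raddf_sum; apply: eq_bigr => j _ /=; rewrite mcoeffZ mcoeffX. Qed.

Lemma eq_linform a a' : a =1 a' -> linform a = linform a'.
Proof. by move=> eq_a; apply: eq_bigr => j _; rewrite eq_a. Qed.

Lemma linformD a a' : linform a + linform a' = linform (fun j => a j + a' j).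
Proof. by rewrite /linform -big_split; apply: eq_bigr => j _; rewrite scalerDl. Qed.

Lemma dhomog1_linform f : f \is 1.-homog -> f = linform (fun j => f@_U_(j)).
Proof.
move=> hf; apply/mpolyP => m; rewrite mcoeff_linform.
case: (mdeg1P m) => [[i /eqP ->]|nm].
  rewrite (bigD1 i) //= eqxx mulr1 big1 ?addr0 // => j ne.
  by rewrite eq_mnm1 (negbTE ne) mulr0.
rewrite (dhomog_nemf_coeff hf); last by apply/negP => /mdeg1P.
rewrite big1 // => j _; case: eqP => [E|]; last by rewrite mulr0.
by case: nm; exists j; rewrite E.
Qed.

Lemma linform_dhomog (mf : measure N) a e :
  (forall j, a j != 0 -> mf U_(j)%MM = e) -> linform a \is e.-homog for mf.
Proof.
move=> ha; apply/dhomog_mcoeffP => m hm; rewrite mcoeff_linform big1 // => j _.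
case: eqP => [E|]; last by rewrite mulr0.
by rewrite mulr1; apply/eqP; apply: contraNT hm => /ha; rewrite E => ->.
Qed.

Lemma mrescale_linform c a : mrescale c (linform a) = linform (fun j => a j * c j).
Proof.
apply/mpolyP => m; rewrite mcoeff_mrescale !mcoeff_linform mulr_suml.
apply: eq_bigr => j _; case: eqP => [<-|]; last by rewrite !mulr0 mul0r.
rewrite !mulr1 /mweight (bigD1 j) //= mnm1E eqxx expr1 big1 ?mulr1 //.
by move=> i ne; rewrite mnm1E eq_sym (negbTE ne) expr0.
Qed.

End Rescaling.

Definition mdeg_in N (T : {set 'I_N}) (m : 'X_{1..N}) : nat := (\sum_(j in T) m j)%N.

Lemma mdeg_in0 N T : @mdeg_in N T 0%MM = 0%N.
Proof. by rewrite /mdeg_in big1 // => j _; rewrite mnm0E. Qed.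

Lemma mdeg_inD N T : {morph @mdeg_in N T : m1 m2 / (m1 + m2)%MM >-> (m1 + m2)%N}.
Proof.
by move=> m1 m2; rewrite /mdeg_in -big_split; apply: eq_bigr => j _; rewrite mnmDE.
Qed.

HB.instance Definition _ N T := isMeasure.Build N (@mdeg_in N T) (mdeg_in0 T) (mdeg_inD T).

Lemma mdeg_in_le N T m : (@mdeg_in N T m <= mdeg m)%N.
Proof. by rewrite /mdeg_in mdegE [X in (_ <= X)%N](bigID (mem T)) leq_addr. Qed.

Lemma mdeg_in1 N T j : @mdeg_in N T U_(j)%MM = (j \in T).
Proof.
rewrite /mdeg_in; case: (boolP (j \in T)) => hj.
  rewrite (bigD1 j) //= mnm1E eqxx big1 ?addn0 // => i /andP [_ ne].
  by rewrite mnm1E eq_sym (negbTE ne).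
by rewrite big1 // => i hi; rewrite mnm1E; case: eqP => // E; rewrite E hi in hj.
Qed.

Section AddVariables.
Variables (k : fieldType) (N : nat) (D : 'I_N -> nat) (T : {set 'I_N}).
Variables (b : 'I_N -> k) (i : nat).
Hypothesis b_T : forall j, j \in T -> b j = 0.
Implicit Types (f g h p : {mpoly k[N]}).
Local Notation inI := (@in_mci_ideal k N D).
Local Notation pr r p := (pihomog (@mdeg_in N T) r p).
Let P := linform b.
Let Q := linform (fun j => (j \in T)%:R : k).

Lemma pihomog_mdeg_in_big r d p : p \is d.-homog -> (d < r)%N -> pr r p = 0.
Proof.
move=> /dhomog_mcoeffP hp lt_dr; apply/mpolyP => m; rewrite mcoeff_pihomog mcoeff0.
case: eqP => // Em; apply: hp; apply/eqP => Ed.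
by move: (mdeg_in_le T m); rewrite Em Ed leqNgt lt_dr.
Qed.

Lemma pihomog_mdeg_in_mulP r g : pr r (P * g) = P * pr r g.
Proof.
have hP : P \is 0.-homog for @mdeg_in N T.
  apply: linform_dhomog => j /=; rewrite mdeg_in1.
  by case: (boolP (j \in T)) => // /b_T ->; rewrite eqxx.
by rewrite (pihomogMl _ _ hP) leq0n subn0.
Qed.

Lemma pihomog_mdeg_in_mulQ r g :
  pr r (Q * g) = if (0 < r)%N then Q * pr r.-1 g else 0.
Proof.
have hQ : Q \is 1.-homog for @mdeg_in N T.
  by apply: linform_dhomog => j /=; rewrite mdeg_in1; case: (j \in T); rewrite ?eqxx.
by rewrite (pihomogMl _ _ hQ) subn1.
Qed.

Lemma pihomog_mdeg_in_mulPQ_pihomog r s g :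
  pr r ((P + Q) * pr s g) =
    (if r == s then P * pr s g else 0) + (if r == s.+1 then Q * pr s g else 0).
Proof.
rewrite mulrDl linearD /= pihomog_mdeg_in_mulP pihomog_mdeg_in_mulQ !pihomog_pihomog.
rewrite eq_sym; congr (_ + _); first by case: eqP; rewrite ?mulr0.
by case: r => [|r] //=; rewrite eqSS eq_sym; case: eqP; rewrite ?mulr0.
Qed.

Lemma mult_inj_add_vars :
  (forall g, g \is i.-homog -> inI (P * g) -> inI g) ->
  (forall g, g \is i.-homog -> inI ((P + Q) * g) -> inI g).
Proof.
move=> P_inj g hg hI; apply: (mci_ideal_from_pihomog (mf := @mdeg_in N T)) => r.
elim/ltn_ind: r => r IH; apply: P_inj; first exact: dhomog_pihomog.
have := mci_ideal_pihomog (@mdeg_in N T) r hI.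
rewrite mulrDl linearD /= pihomog_mdeg_in_mulP pihomog_mdeg_in_mulQ.
case: r IH => [|r] IH /=; first by rewrite addr0.
move=> hPQ; rewrite -[X in inI X](addrK (Q * pr r g)).
by apply: mci_idealB hPQ _; apply: mci_idealMl; apply: IH.
Qed.

Lemma mult_surj_add_vars :
  (forall h, h \is (i + 1).-homog -> exists g, g \is i.-homog /\ inI (h - P * g)) ->
  (forall h, h \is (i + 1).-homog ->
     exists g, g \is i.-homog /\ inI (h - (P + Q) * g)).
Proof.
move=> P_surj h hh.
have hPQ : P + Q \is 1.-homog by rewrite linformD; apply: linform_dhomog => j _; apply: mdeg1.
have hres G : G \is i.-homog -> h - (P + Q) * G \is (i + 1).-homog.
  by move=> hG; apply: rpredB => //; rewrite addnC; apply: dhomogM.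
suff [G [hG HG]] : exists G, G \is i.-homog /\
    forall r, (r < (i + 1).+1)%N -> inI (pr r (h - (P + Q) * G)).
  exists G; split => //; apply: (mci_ideal_from_pihomog (mf := @mdeg_in N T)) => r.
  case: (ltnP r (i + 1).+1) => hr; first exact: HG.
  by rewrite (pihomog_mdeg_in_big (hres G hG)) //; apply: mci_ideal0.
(* Correcting G in T-degree R only changes the error in T-degrees R and R + 1. *)
elim: (i + 1).+1 => [|R [G [hG HG]]]; first by exists 0; split; first exact: dhomog0.
set E := pr R (h - (P + Q) * G).
have [g [hg hEg]] := P_surj E (dhomog_pihomog _ _ (hres G hG)).
exists (G + pr R g); split; first by apply: rpredD => //; apply: dhomog_pihomog.
move=> r lt_rR; rewrite mulrDr opprD addrA linearB /= pihomog_mdeg_in_mulPQ_pihomog.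
rewrite (ltn_eqF lt_rR) addr0; case: eqP => [->|/eqP ne_rR]; last first.
  by rewrite subr0; apply: HG; rewrite ltn_neqAle ne_rR -ltnS.
have := mci_ideal_pihomog (@mdeg_in N T) R hEg.
by rewrite linearB /= pihomog_mdeg_in_mulP pihomog_id.
Qed.

Lemma mult_inj_or_surj_add_vars :
  mult_inj_or_surj D P 1 i -> mult_inj_or_surj D (P + Q) 1 i.
Proof.
by case=> [/mult_inj_add_vars|/mult_surj_add_vars]; [left|right].
Qed.

End AddVariables.

Lemma has_WLP_sum_vars (k : fieldType) (N : nat) (D : 'I_N -> nat) :
  has_WLP k D <-> forall i, mult_inj_or_surj D (\sum_(j < N) 'X_j : {mpoly k[N]}) 1 i.
Proof.
split=> [[l [hl l_wlp]] i|sum_wlp]; last first.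
  by exists (\sum_(j < N) 'X_j); split=> //; apply: rpred_sum => j _; rewrite dhomogX /= mdeg1.
pose a j := l@_U_(j).
pose c j := if a j != 0 then (a j)^-1 else 1.
have c_neq0 j : c j != 0.
  by rewrite /c; case: ifP => [a_neq0|_]; [rewrite invr_eq0|apply: oner_neq0].
have := mult_inj_or_surj_mrescale c_neq0 (l_wlp i).
rewrite (dhomog1_linform hl) -/a mrescale_linform.
pose b j := ((a j != 0)%:R : k).
rewrite (@eq_linform _ _ _ b); last first.
  by move=> j; rewrite /b /c; case: eqP => [->|/eqP a_neq0]; rewrite ?mul0r ?mulfV.
move=> /(@mult_inj_or_surj_add_vars _ _ _ [set j | a j == 0]); rewrite linformD.
have -> : linform (fun j => b j + (j \in [set j | a j == 0])%:R) = \sum_(j < N) 'X_j.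
  by apply: eq_bigr => j _; rewrite /b inE; case: eqP; rewrite /= ?add0r ?addr0 scale1r.
by apply=> j; rewrite inE /b => ->.
Qed.

Section LastVariable.
Variables (R : nzRingType) (n : nat).
Local Notation widen := (widen_ord (leqnSn n)).
Implicit Types (m : 'X_{1..n}) (M : 'X_{1..n.+1}).

Definition mnm_init M : 'X_{1..n} := [multinom M (widen i) | i < n].

Definition mnm_rcons m t : 'X_{1..n.+1} := (mnmwiden m + U_(ord_max) *+ t)%MM.

Lemma ord_max_or_widen (P : 'I_n.+1 -> Prop) :
  P ord_max -> (forall j, P (widen j)) -> forall i, P i.
Proof.
move=> P_max P_widen i; case: (unliftP ord_max i) => [j ->|->] //.
by have -> : lift ord_max j = widen j by apply: val_inj; rewrite /= /bump leqNgt ltn_ord.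
Qed.

Lemma ord_max_eq_widenF j : (ord_max == widen j) = false.
Proof. by rewrite -val_eqE /= gtn_eqF. Qed.

Lemma mnm_rcons_widen m t i : mnm_rcons m t (widen i) = m i.
Proof. by rewrite mnmDE mnmwiden_widen mulmnE mnm1E ord_max_eq_widenF mul0n addn0. Qed.

Lemma mnm_rcons_max m t : mnm_rcons m t ord_max = t.
Proof. by rewrite mnmDE mnmwiden_ordmax mulmnE mnm1E eqxx mul1n. Qed.

Lemma mnm_rconsK m t : mnm_init (mnm_rcons m t) = m.
Proof. by apply/mnmP => i; rewrite mnmE mnm_rcons_widen. Qed.

Lemma mnm_initK M : mnm_rcons (mnm_init M) (M ord_max) = M.
Proof.
apply/mnmP; apply: ord_max_or_widen; first by rewrite mnm_rcons_max.
by move=> j; rewrite mnm_rcons_widen mnmE.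
Qed.

Lemma eq_mnm_rcons M m t : (M == mnm_rcons m t) = (mnm_init M == m) && (M ord_max == t).
Proof.
apply/eqP/andP => [->|[/eqP <- /eqP <-]]; last by rewrite mnm_initK.
by rewrite mnm_rconsK mnm_rcons_max.
Qed.

Lemma mdeg_mnm_init M : mdeg M = (mdeg (mnm_init M) + M ord_max)%N.
Proof.
rewrite !mdegE big_ord_recr /=; congr (_ + _)%N.
by apply: eq_bigr => i _; rewrite mnmE.
Qed.

Lemma mdeg_mnm_rcons m t : mdeg (mnm_rcons m t) = (mdeg m + t)%N.
Proof. by rewrite mdeg_mnm_init mnm_rconsK mnm_rcons_max. Qed.

Lemma mcoeff_mwiden (b : {mpoly R[n]}) M :
  (mwiden b)@_M = if M ord_max == 0%N then b@_(mnm_init M) else 0.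
Proof.
rewrite {1}[b]mpolyE rmorph_sum raddf_sum /=.
under eq_bigr do rewrite mwidenZ mwidenX mcoeffZ mcoeffX.
case: ifP => M_max.
  have EM : M = mnmwiden (mnm_init M).
    by rewrite -[M in LHS]mnm_initK (eqP M_max) /mnm_rcons mulm0n addm0.
  rewrite -[RHS]mulr1 -(sum_msupp_mcoeffX (fun _ => 1)); apply: eq_bigr => m _.
  by rewrite mul1r {1}EM (inj_eq (@inj_mnmwiden _)).
rewrite big1 // => m _; case: eqP => [E|]; last by rewrite mulr0.
by move: M_max; rewrite -E mnmwiden_ordmax.
Qed.

Lemma muniX M : muni 'X_[M] = 'X_[mnm_init M] *: 'X^(M ord_max) :> {poly {mpoly R[n]}}.
Proof. by rewrite muniE msuppX big_seq1 mcoeffX eqxx scale1r. Qed.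

Lemma mcoeff_muni (x : {mpoly R[n.+1]}) m t : ((muni x)`_t)@_m = x@_(mnm_rcons m t).
Proof.
rewrite {1}[x]mpolyE raddf_sum coef_sum raddf_sum /=.
rewrite -[RHS]mulr1 -(sum_msupp_mcoeffX (fun _ => 1)); apply: eq_bigr => M _.
rewrite muniZ coefZ mcoeffCM muniX coefZ coefXn eq_mnm_rcons mul1r; congr (_ * _).
by rewrite (eq_sym t); case: eqP; rewrite ?andbT ?andbF ?mulr1 ?mulr0 ?mcoeffX ?mcoeff0.
Qed.

Lemma muni_mwiden (b : {mpoly R[n]}) : muni (mwiden b) = b%:P.
Proof.
apply/polyP => t; apply/mpolyP => m.
rewrite mcoeff_muni mcoeff_mwiden mnm_rcons_max mnm_rconsK coefC.
by case: eqP => // _; rewrite mcoeff0.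
Qed.

Lemma muni_Xmax : muni ('X_ord_max : {mpoly R[n.+1]}) = 'X.
Proof.
have mnm_init_max : mnm_init U_(ord_max) = 0%MM.
  by apply/mnmP => i; rewrite !mnmE ord_max_eq_widenF.
by rewrite muniX mnm_init_max mpolyX0 mnm1E eqxx expr1 scale1r.
Qed.

Lemma dhomog_mwiden (b : {mpoly R[n]}) e : b \is e.-homog -> mwiden b \is e.-homog.
Proof.
move=> /dhomog_mcoeffP hb; apply/dhomog_mcoeffP => M hM; rewrite mcoeff_mwiden.
by case: eqP => // M_max; apply: hb; apply: contra hM; rewrite /= mdeg_mnm_init M_max addn0.
Qed.

Lemma dhomog_muni_coef (x : {mpoly R[n.+1]}) i t :
  x \is i.-homog -> (muni x)`_t \is (i - t)%N.-homog.
Proof.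
move=> /dhomog_mcoeffP hx; apply/dhomog_mcoeffP => m hm; rewrite mcoeff_muni.
by apply: hx; rewrite /= mdeg_mnm_rcons; apply: contra hm => /eqP <-; rewrite addnK.
Qed.

Lemma muni_coef_eq0 (x : {mpoly R[n.+1]}) i t :
  x \is i.-homog -> (i < t)%N -> (muni x)`_t = 0.
Proof.
move=> /dhomog_mcoeffP hx lt_it; apply/mpolyP => m; rewrite mcoeff_muni mcoeff0 hx //=.
by rewrite mdeg_mnm_rcons; apply: contraTneq lt_it => <-; rewrite -leqNgt leq_addl.
Qed.

Lemma muni_sum_mwiden K (c : nat -> {mpoly R[n]}) :
  muni (\sum_(t < K) mwiden (c t) * 'X_ord_max ^+ t) = \poly_(t < K) c t.
Proof.
rewrite rmorph_sum poly_def; apply: eq_bigr => t _ /=.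
by rewrite rmorphM rmorphXn /= muni_mwiden muni_Xmax mul_polyC.
Qed.

Lemma dhomog_sum_mwiden K (c : nat -> {mpoly R[n]}) i :
  (forall t, (t < K)%N -> (t <= i)%N /\ c t \is (i - t)%N.-homog) ->
  \sum_(t < K) mwiden (c t) * 'X_ord_max ^+ t \is i.-homog.
Proof.
move=> hc; apply: rpred_sum => t _; have [le_ti hct] := hc t (ltn_ord t).
rewrite -(subnK le_ti); apply: dhomogM; first exact: dhomog_mwiden.
have hy : ('X_ord_max : {mpoly R[n.+1]}) \is 1.-homog by rewrite dhomogX /= mdeg1.
by have := dhomogMn t hy; rewrite mul1n.
Qed.

Lemma muni_sum_mwiden_coef (p : {poly {mpoly R[n]}}) :
  muni (\sum_(t < size p) mwiden p`_t * 'X_ord_max ^+ t) = p.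
Proof. by rewrite muni_sum_mwiden coefK. Qed.

Lemma dhomog_horner_muni (x : {mpoly R[n.+1]}) (a : {mpoly R[n]}) d :
  x \is d.-homog -> a \is 1.-homog -> (muni x).[a] \is d.-homog.
Proof.
move=> hx ha; rewrite horner_coef; apply: rpred_sum => t _.
case: (leqP t d) => [le_td|lt_dt]; last by rewrite (muni_coef_eq0 hx lt_dt) mul0r dhomog0.
rewrite -(subnK le_td); apply: dhomogM; first exact: dhomog_muni_coef.
by rewrite -[X in X.-homog]mul1n; apply: dhomogMn.
Qed.

End LastVariable.

Section SumOfVariables.
Variables (k : fieldType) (n : nat) (D : 'I_n.+1 -> nat).
Hypothesis D_max_gt0 : (0 < D ord_max)%N.
Local Notation dd := (D ord_max).
Local Notation inA := (@in_mci_ideal k n.+1 D).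
Local Notation inB := (@in_mci_ideal k n (init_exps D)).
Let L : {mpoly k[n]} := \sum_(j < n) 'X_j.
Let l : {mpoly k[n.+1]} := \sum_(j < n.+1) 'X_j.
Local Notation widen := (widen_ord (leqnSn n)).

Lemma in_mci_ideal_muni (x : {mpoly k[n.+1]}) :
  inA x <-> (forall t, (t < dd)%N -> inB ((muni x)`_t)).
Proof.
have DB_widen j : init_exps D j = D (widen j) by congr (D _); apply: val_inj.
split=> [/in_mci_idealP hx t ht|hx].
  apply/in_mci_idealP => m /forallP sm; rewrite mcoeff_muni hx //.
  apply/forallP; apply: ord_max_or_widen; first by rewrite mnm_rcons_max.
  by move=> j; rewrite mnm_rcons_widen -DB_widen.
apply/in_mci_idealP => M /forallP sM; rewrite -[M]mnm_initK -mcoeff_muni.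
move/in_mci_idealP: (hx _ (sM ord_max)); apply; apply/forallP => j.
by rewrite mnmE DB_widen.
Qed.

Lemma muni_sum_vars : muni l = L%:P + 'X.
Proof.
have -> : l = mwiden L + 'X_ord_max.
  rewrite /l big_ord_recr [mwiden _]rmorph_sum /=.
  by under [in RHS]eq_bigr do rewrite mwidenX mnmwiden1.
by rewrite rmorphD /= muni_mwiden muni_Xmax.
Qed.

Lemma coef_mul_sum_vars p t :
  ((L%:P + 'X) * p)`_t = L * p`_t + (if t == 0%N then 0 else p`_t.-1).
Proof. by rewrite mulrDl coefD coefCM coefXM. Qed.

Lemma dhomog_sum_vars : L \is 1.-homog.
Proof. by apply: rpred_sum => j _; rewrite dhomogX /= mdeg1. Qed.

Lemma mci_ideal_chain (c : nat -> {mpoly k[n]}) :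
  (forall t, (0 < t < dd)%N -> inB (L * c t + c t.-1)) ->
  forall t, (t < dd)%N -> inB (c t - (-L) ^+ (dd.-1 - t) * c dd.-1).
Proof.
move=> c_rec; suff chain s : (s < dd)%N -> inB (c (dd.-1 - s)%N - (-L) ^+ s * c dd.-1).
  by move=> t lt_tdd; have := chain (dd.-1 - t)%N; rewrite subKn; [apply; lia|lia].
elim: s => [|s IH] lt_sdd; first by rewrite subn0 expr0 mul1r subrr; apply: mci_ideal0.
have := mci_idealB (c_rec (dd.-1 - s)%N ltac:(lia)) (mci_idealMl L (IH (ltnW lt_sdd))).
have -> : ((dd.-1 - s).-1 = dd.-1 - s.+1)%N by lia.
set ct := c (dd.-1 - s)%N; set cd := c dd.-1; set cp := c (dd.-1 - s.+1)%N.
by rewrite exprS; congr inB; ring.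
Qed.

Lemma mci_ideal_sub_mul_sum_vars (H : {mpoly k[n]}) (g : {mpoly k[n.+1]}) :
  let c t := (muni g)`_t in
  inA (mwiden H - l * g) ->
  inB (H + (-L) ^+ dd * c dd.-1) /\
  forall t, (t < dd)%N -> inB (c t - (-L) ^+ (dd.-1 - t) * c dd.-1).
Proof.
move=> c /in_mci_ideal_muni hg; have hcoef t : (t < dd)%N ->
    inB ((if t == 0%N then H else 0) - (L * c t + (if t == 0%N then 0 else c t.-1))).
  move=> lt_tdd; have := hg t lt_tdd.
  by rewrite rmorphB rmorphM /= muni_mwiden muni_sum_vars coefB coefC coef_mul_sum_vars.
have hchain : forall t, (t < dd)%N -> inB (c t - (-L) ^+ (dd.-1 - t) * c dd.-1).
  apply: mci_ideal_chain => t /andP [t_gt0 lt_tdd].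
  by move: (hcoef t lt_tdd); rewrite gtn_eqF // sub0r => /mci_idealN; rewrite opprK.
split=> //; have := mci_idealD (hcoef 0%N D_max_gt0) (mci_idealMl L (hchain 0%N D_max_gt0)).
have -> : (- L) ^+ dd = - L * (- L) ^+ dd.-1 by rewrite -exprS prednK.
by rewrite eqxx addr0 subn0; congr inB; ring.
Qed.

Lemma mult_sum_vars_inj i :
  ((dd <= i.+1)%N -> forall b, b \is (i.+1 - dd)%N.-homog -> inB (L ^+ dd * b) -> inB b) ->
  forall g, g \is i.-homog -> inA (l * g) -> inA g.
Proof.
move=> L_inj g hg hlg; have := @mci_ideal_sub_mul_sum_vars 0 g; rewrite rmorph0 sub0r.
move=> /(_ (mci_idealN hlg)) /= [htop hchain]; set c := (muni g)`_dd.-1 in htop hchain.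
have hLc : inB (L ^+ dd * c).
  rewrite -[_ * c](signrMK dd); apply: mci_idealMl.
  by rewrite mulrA -exprNn -[X in inB X]add0r.
have hc : inB c.
  case: (leqP dd i.+1) => [le_ddi|lt_idd].
    apply: L_inj le_ddi _ _ hLc.
    by rewrite (_ : i.+1 - dd = i - dd.-1)%N ?dhomog_muni_coef //; lia.
  by rewrite /c (muni_coef_eq0 hg); [exact: mci_ideal0|lia].
apply/in_mci_ideal_muni => t lt_tdd.
by apply: mci_ideal_trans (hchain t lt_tdd) _; apply: mci_idealMl.
Qed.

Lemma mult_pow_sum_vars_inj i : (dd <= i.+1)%N ->
  (forall g, g \is i.-homog -> inA (l * g) -> inA g) ->
  forall b, b \is (i.+1 - dd)%N.-homog -> inB (L ^+ dd * b) -> inB b.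
Proof.
move=> le_ddi l_inj b hb hLb.
(* The solution of the recurrence with top coefficient b. *)
pose c t := (- L) ^+ (dd.-1 - t) * b.
pose g := \sum_(t < dd) mwiden (c t) * 'X_ord_max ^+ t.
have hg : g \is i.-homog.
  apply: dhomog_sum_mwiden => t lt_tdd; split; first lia.
  rewrite (_ : i - t = (dd.-1 - t) + (i.+1 - dd))%N; last lia.
  apply: dhomogM => //; rewrite -[X in X.-homog]mul1n; apply: dhomogMn.
  by rewrite rpredN dhomog_sum_vars.
have muni_g : muni g = \poly_(t < dd) c t by apply: muni_sum_mwiden.
have hlg : inA (l * g).
  apply/in_mci_ideal_muni => t lt_tdd.
  rewrite rmorphM /= muni_sum_vars muni_g coef_mul_sum_vars !coef_poly lt_tdd.
  case: eqP => [->|/eqP t_neq0].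
    rewrite addr0 /c subn0 -[X in inB X]opprK; apply: mci_idealN.
    have -> : - (L * ((- L) ^+ dd.-1 * b)) = (-1) ^+ dd * (L ^+ dd * b).
      by rewrite (exprNn L) -[in RHS](prednK D_max_gt0) !exprS; ring.
    exact: mci_idealMl.
  rewrite ifT /c; last lia.
  rewrite (_ : dd.-1 - t.-1 = (dd.-1 - t).+1)%N; last lia.
  by rewrite (_ : _ + _ = 0); [exact: mci_ideal0|rewrite exprS; ring].
have /in_mci_ideal_muni /(_ dd.-1 ltac:(lia)) := l_inj g hg hlg.
by rewrite muni_g coef_poly ifT /c ?subnn ?expr0 ?mul1r //; lia.
Qed.

Lemma mult_pow_sum_vars_surj i : (dd <= i.+1)%N ->
  (forall h, h \is (i + 1).-homog -> exists g, g \is i.-homog /\ inA (h - l * g)) ->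
  forall H, H \is (i.+1 - dd + dd)%N.-homog -> exists c, inB (H - L ^+ dd * c).
Proof.
move=> le_ddi l_surj H hH; rewrite subnK // in hH.
have hwH : mwiden H \is (i + 1).-homog by rewrite addn1; apply: dhomog_mwiden.
have [g [_ hg]] := l_surj _ hwH.
have [htop _] := mci_ideal_sub_mul_sum_vars hg.
exists (- ((-1) ^+ dd * (muni g)`_dd.-1)).
by move: htop; rewrite /= (exprNn L); congr inB; ring.
Qed.

Lemma mult_sum_vars_surj i : (dd <= i.+1)%N ->
  (forall H, H \is (i.+1 - dd + dd)%N.-homog ->
     exists c, c \is (i.+1 - dd)%N.-homog /\ inB (H - L ^+ dd * c)) ->
  forall h, h \is (i + 1).-homog -> exists g, inA (h - l * g).
Proof.
move=> le_ddi L_surj h hh; set q := muni h; set a := - L.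
(* Modulo 'X - a, q is congruent to q.[a] and 'X^dd to a ^+ dd. *)
have [Q EQ] : exists Q, q - q.[a]%:P = Q * ('X - a%:P).
  by apply/factor_theorem; rewrite /root hornerD hornerN hornerC subrr.
have [G EG] : exists G, 'X^dd - (a ^+ dd)%:P = G * ('X - a%:P).
  by apply/factor_theorem; rewrite /root hornerD hornerN hornerXn hornerC subrr.
have [|c0 [_ hc0]] := L_surj q.[a].
  rewrite subnK // -addn1; apply: dhomog_horner_muni => //.
  by rewrite rpredN dhomog_sum_vars.
pose e := (-1) ^+ dd * c0; pose p := Q - G * e%:P.
exists (\sum_(t < size p) mwiden p`_t * 'X_ord_max ^+ t).
apply/in_mci_ideal_muni => t lt_tdd.
rewrite rmorphB rmorphM /= muni_sum_mwiden_coef muni_sum_vars -/q.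
have aE : a ^+ dd * e = L ^+ dd * c0.
  by rewrite /a /e (exprNn L) mulrACA -exprMn mulrNN mulr1 expr1n mul1r.
have -> : q - (L%:P + 'X) * p = (q.[a] - L ^+ dd * c0)%:P + 'X^dd * e%:P.
  have -> : L%:P + 'X = 'X - a%:P by rewrite /a polyCN opprK addrC.
  rewrite /p mulrC mulrBl -EQ mulrAC -EG -aE polyCB (polyCM (a ^+ dd) e); ring.
rewrite coefD coefC coefXnM lt_tdd addr0.
by case: t lt_tdd => [|t] _ /=; [exact: hc0|exact: mci_ideal0].
Qed.

Lemma mult_sum_vars_max_rank_iff :
  (forall i, mult_inj_or_surj D l 1 i) <->
  (forall i, mult_inj_or_surj (init_exps D) (L ^+ dd) dd i).
Proof.
have hLdd : L ^+ dd \is dd.-homog.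
  by rewrite -[X in X.-homog]mul1n; apply: dhomogMn; apply: dhomog_sum_vars.
have hl : l \is 1.-homog by apply: rpred_sum => j _; rewrite dhomogX /= mdeg1.
split=> l_wlp i.
  set j := (i + dd).-1; have le_ddj : (dd <= j.+1)%N by lia.
  have ji : (j.+1 - dd = i)%N by lia.
  case: (l_wlp j) => [l_inj|l_surj]; [left|right].
    by move: (mult_pow_sum_vars_inj le_ddj l_inj); rewrite ji.
  by apply: (mult_surj_dhomog hLdd); move: (mult_pow_sum_vars_surj le_ddj l_surj); rewrite ji.
case: (leqP dd i.+1) => [le_ddi|lt_idd]; last first.
  by left; apply: mult_sum_vars_inj => le_ddi; exfalso; lia.
case: (l_wlp (i.+1 - dd)%N) => [L_inj|L_surj]; [left|right].
  by apply: mult_sum_vars_inj => _.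
by apply: (mult_surj_dhomog hl); apply: mult_sum_vars_surj.
Qed.

End SumOfVariables.

Unset Implicit Arguments.

Theorem lemma4p7 (k : fieldType) (n : nat) (hn : (2 <= n)%N)
    (d : 'I_n -> nat) (hd : forall j : 'I_n, (0 < d j)%N) :
  has_WLP k d <->
  (forall i : nat,
     mult_inj_or_surj (init_exps d)
       ((\sum_(j < n.-1) 'X_j : {mpoly k[n.-1]}) ^+ d (last_index (ltnW hn)))
       (d (last_index (ltnW hn))) i).
Proof.
case: n hn d hd => [//|n] hn d hd.
have -> : last_index (ltnW hn) = ord_max by apply: val_inj.
by rewrite has_WLP_sum_vars; apply: mult_sum_vars_max_rank_iff.
Qed.
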